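(* Let $\mathbf{AUS}_3$ be the set of density matrices $\sigma$ on $\mathbb{C}^2\otimes\mathbb{C}^2$ such that for every unitary $U$ on $\mathbb{C}^2\otimes\mathbb{C}^2$, every choice of unit vectors $\hat u_1,\hat u_2,\hat u_3\in\mathbb{R}^3$ and every choice of orthonormal vectors $\hat v_1,\hat v_2,\hat v_3\in\mathbb{R}^3$, $$\frac{1}{\sqrt3}\Big|\sum_{i=1}^3\mathrm{Tr}\big(U\sigma U^\dagger\,(\hat u_i\cdot\vec s)\otimes(\hat v_i\cdot\vec s)\big)\Big|\le 1.$$ Then a two-qubit state $\sigma$ belongs to $\mathbf{AUS}_3$ if and only if its purity satisfies $\mathrm{Tr}(\sigma^2)\le 1/2$; equivalently, iff $\|\sigma-I/4\|_F\le 1/2$, where $\|\cdot\|_F$ is the Frobenius norm.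
   Context: $\vec{s}=(s_1,s_2,s_3)$ denotes the vector of Pauli matrices, and for $\hat w\in\mathbb{R}^3$, $\hat w\cdot\vec s=\sum_k w_k s_k$. The purity of $\sigma$ is $\mathrm{Tr}(\sigma^2)$. *)

From HB Require Import structures.
From mathcomp Require Import all_boot all_order all_algebra.
From mathcomp Require Import complex mxtens.
Set Implicit Arguments. Unset Strict Implicit. Unset Printing Implicit Defensive.
Import Order.TTheory GRing.Theory Num.Theory.
Local Open Scope ring_scope.
Local Open Scope complex_scope.

Section Defs.
Variable R : rcfType.
Local Notation C := R[i].

Definition adj m n (A : 'M[C]_(m, n)) : 'M[C]_(n, m) := (map_mx (@conjc R) A)^T.

Definition pauli (k : 'I_3) : 'M[C]_2 :=
  \matrix_(i < 2, j < 2)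
    if k == 0 :> nat then (if i == j then 0 else 1)
    else if k == 1 :> nat then
      (if i == j then 0 else if i == 0 :> nat then - 'i else 'i)
    else (if i == j then (if i == 0 :> nat then 1 else -1) else 0).

Definition pdot (w : 'rV[R]_3) : 'M[C]_2 := \sum_(k < 3) (w 0 k)%:C *: pauli k.

Definition rdot (a b : 'rV[R]_3) : R := \sum_(k < 3) a 0 k * b 0 k.

Definition unit_vec (a : 'rV[R]_3) : Prop := rdot a a = 1.

Definition orthonormal3 (v : 'I_3 -> 'rV[R]_3) : Prop :=
  forall i j, rdot (v i) (v j) = (i == j)%:R.

Definition unitary n (U : 'M[C]_n) : Prop := U *m adj U = 1%:M.

Definition density n (s : 'M[C]_n) : Prop :=
  [/\ adj s = s,
      (forall v : 'cV[C]_n, 0 <= (adj v *m s *m v) 0 0)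
    & \tr s = 1].

Definition AUS3 (s : 'M[C]_(2 * 2)) : Prop :=
  density s /\
  forall (U : 'M[C]_(2 * 2)) (u v : 'I_3 -> 'rV[R]_3),
    unitary U -> (forall i, unit_vec (u i)) -> orthonormal3 v ->
    ((Num.sqrt (3 : R))^-1)%:C *
      `| \sum_(i < 3) \tr (U *m s *m adj U *m (pdot (u i) *t pdot (v i))) | <= 1.

Definition purity n (s : 'M[C]_n) : C := \tr (s *m s).

Definition frob m n (A : 'M[C]_(m, n)) : R :=
  Num.sqrt (\sum_(i < m) \sum_(j < n) Normc.normc (A i j) ^+ 2).

End Defs.

From HB Require Import structures.
From mathcomp Require Import all_boot all_order all_algebra.
From mathcomp Require Import complex mxtens.
From mathcomp Require Import ring lra.
From mathcomp Require Import spectral.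
Import Order.TTheory GRing.Theory Num.Theory.
Local Open Scope ring_scope.
Local Open Scope complex_scope.
Set Implicit Arguments. Unset Strict Implicit. Unset Printing Implicit Defensive.

(* If [sigma = I/4 + X], the correlation operator [W = \sum_i (u_i.s) (x) (v_i.s)] is
   Hermitian and traceless with [Tr W^2 = 12] (the [u_i] are unit vectors and the [v_i]
   orthonormal), so [Tr (U sigma U^* W) = Tr (U X U^* W)] is at most
   [||X||_F * sqrt 12 = sqrt 3 * (2 ||X||_F)] by Cauchy-Schwarz, while
   [||X||_F^2 = Tr sigma^2 - 1/4].
   Conversely, write [sigma = P^* diag(d) P].  For [u_i = diag(c) v_i] one gets
   [W = \sum_k c_k s_k (x) s_k], which is diagonal in the Bell basis with eigenvalues
   [lambda(c)] ranging over all vectors orthogonal to [(1,1,1,1)] with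
   [|lambda|^2 = 4 |c|^2].  Taking [lambda] along [d - 1/4] with [|c|^2 = 3] and rotating
   [sigma] into the Bell basis gives the value [2 sqrt 3 ||d - 1/4||], which exceeds [sqrt 3]
   as soon as [Tr sigma^2 > 1/2]; the [u_i] are unit vectors when the orthonormal basis
   [v] is isotropic for the traceless form [diag(c_k^2 - 1)]. *)

Section TwoQubitCorrelations.
Variable R : rcfType.
Local Notation C := R[i].
Local Notation realC := (real_complex R).

(** * Adjoints, traces and the Frobenius norm *)

Lemma adjM m n p (A : 'M[C]_(m, n)) (B : 'M[C]_(n, p)) :
  adj (A *m B) = adj B *m adj A.
Proof. by rewrite /adj map_mxM trmx_mul. Qed.

Lemma adjK m n (A : 'M[C]_(m, n)) : adj (adj A) = A.
Proof. by apply/matrixP=> i j; rewrite !mxE conjcK. Qed.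

Lemma adjD m n (A B : 'M[C]_(m, n)) : adj (A + B) = adj A + adj B.
Proof. by apply/matrixP=> i j; rewrite !mxE rmorphD. Qed.

Lemma adjN m n (A : 'M[C]_(m, n)) : adj (- A) = - adj A.
Proof. by apply/matrixP=> i j; rewrite !mxE rmorphN. Qed.

Lemma adj_sum m n (I : finType) (F : I -> 'M[C]_(m, n)) :
  adj (\sum_i F i) = \sum_i adj (F i).
Proof.
apply/matrixP=> i j; rewrite !mxE !summxE rmorph_sum.
by apply: eq_bigr => k _; rewrite !mxE.
Qed.

Lemma adjZ_real m n (x : R) (A : 'M[C]_(m, n)) : adj (x%:C *: A) = x%:C *: adj A.
Proof. by apply/matrixP=> i j; rewrite !mxE rmorphM; congr (_ * _); exact: conjc_real. Qed.

Lemma adj_scalar_real n (x : R) : adj (x%:C%:M : 'M[C]_n) = x%:C%:M.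
Proof.
by apply/matrixP=> i j; rewrite !mxE rmorphMn eq_sym; congr (_ *+ _); exact: conjc_real.
Qed.

Lemma adj_map_real m n (A : 'M[R]_(m, n)) : adj (map_mx realC A) = map_mx realC A^T.
Proof. by apply/matrixP=> i j; rewrite !mxE; exact: conjc_real. Qed.

Lemma adj_tens m n p q (A : 'M[C]_(m, n)) (B : 'M[C]_(p, q)) :
  adj (A *t B) = adj A *t adj B.
Proof. by apply/matrixP=> i j; rewrite !mxE rmorphM. Qed.

Lemma mxtrace_adj n (A : 'M[C]_n) : \tr (adj A) = (\tr A)^*.
Proof. by rewrite /mxtrace rmorph_sum; apply: eq_bigr => i _; rewrite !mxE. Qed.

Lemma mxtrace_sum n (I : finType) (F : I -> 'M[C]_n) : \tr (\sum_i F i) = \sum_i \tr (F i).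
Proof. exact: raddf_sum. Qed.

Lemma mxtrace_tens m n (A : 'M[C]_m) (B : 'M[C]_n) : \tr (A *t B) = \tr A * \tr B.
Proof.
rewrite /mxtrace mulr_sum; apply: eq_bigr => k _.
by case: (mxtens_indexP k) => i j; rewrite tensmxE mxtens_indexK.
Qed.

Lemma mxtrace_conj n (P Q A : 'M[C]_n) : Q *m P = 1%:M -> \tr (P *m A *m Q) = \tr A.
Proof. by move=> QP; rewrite mxtrace_mulC mulmxA QP mul1mx. Qed.

Lemma unitaryM n (A B : 'M[C]_n) : unitary A -> unitary B -> unitary (A *m B).
Proof. by move=> hA hB; rewrite /unitary adjM mulmxA -(mulmxA A) hB mulmx1. Qed.

Lemma conjc_fixed_real (z : C) : z^* = z -> z = (complex.Re z)%:C.
Proof. by case: z => a b [] hb; apply/eqP; rewrite eq_complex /= eqxx /=; apply/eqP; lra. Qed.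

Lemma normc_real (x : R) : `|x%:C| = `|x|%:C.
Proof. by rewrite normc_def /= expr0n /= addr0 sqrtr_sqr. Qed.

Lemma mulcJ_normc (z : C) : z * z^* = (Normc.normc z ^+ 2)%:C.
Proof.
case: z => a b; rewrite /Normc.normc sqr_sqrtr ?addr_ge0 ?sqr_ge0 //.
by apply/eqP; rewrite eq_complex /=; apply/andP; split; apply/eqP; ring.
Qed.

Lemma mxtrace_mul_adj m n (A : 'M[C]_(m, n)) :
  \tr (A *m adj A) = (\sum_i \sum_j Normc.normc (A i j) ^+ 2)%:C.
Proof.
rewrite /mxtrace rmorph_sum; apply: eq_bigr => i _.
by rewrite mxE rmorph_sum; apply: eq_bigr => j _; rewrite !mxE mulcJ_normc.
Qed.

Lemma frobE m n (A : 'M[C]_(m, n)) : frob A = Num.sqrt (complex.Re (\tr (A *m adj A))).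
Proof. by rewrite mxtrace_mul_adj. Qed.

Lemma frob_sqr m n (A : 'M[C]_(m, n)) : (frob A ^+ 2)%:C = \tr (A *m adj A).
Proof.
rewrite mxtrace_mul_adj sqr_sqrtr //.
by apply: sumr_ge0 => i _; apply: sumr_ge0 => j _; apply: sqr_ge0.
Qed.

Lemma frob_unitary_conj n (U X : 'M[C]_n) : unitary U -> frob (U *m X *m adj U) = frob X.
Proof.
move=> hU; rewrite !frobE !adjM adjK !mulmxA -(mulmxA _ (adj U) U) (mulmx1C hU) mulmx1.
by rewrite -(mulmxA U X) (mxtrace_conj _ (mulmx1C hU)).
Qed.

Lemma quad_ge0_discr (x y w : R) : 0 <= y ->
  (forall a, 0 <= a ^+ 2 * y - 2 * a * x + w) -> x ^+ 2 <= y * w.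
Proof.
move=> y_ge0 q_ge0; have [y0|y_neq0] := eqVneq y 0.
  have [->|x_neq0] := eqVneq x 0; first by rewrite expr0n y0 mul0r.
  have := q_ge0 ((w + 1) / (2 * x)); rewrite y0 mulr0 add0r.
  have -> : 2 * ((w + 1) / (2 * x)) * x = w + 1 by field.
  lra.
have y_gt0 : 0 < y by rewrite lt_def y_neq0.
have := q_ge0 (x / y); rewrite -(ler_pM2r y_gt0) mul0r => h.
have e : (x / y) ^+ 2 * y - 2 * (x / y) * x + w = (w * y - x ^+ 2) / y by field.
by move: h; rewrite e mulfVK // subr_ge0 mulrC.
Qed.

Lemma herm_mxtrace_mul_real n (Y W : 'M[C]_n) : adj Y = Y -> adj W = W ->
  \tr (Y *m W) = (complex.Re (\tr (Y *m W)))%:C.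
Proof. by move=> hY hW; apply: conjc_fixed_real; rewrite -mxtrace_adj adjM hY hW mxtrace_mulC. Qed.

Lemma herm_mxtrace_mul_le n (Y W : 'M[C]_n) : adj Y = Y -> adj W = W ->
  `|\tr (Y *m W)| <= (frob Y * frob W)%:C.
Proof.
move=> hY hW; rewrite herm_mxtrace_mul_real // normc_real lecR.
set x := complex.Re _.
have eY : \tr (Y *m Y) = (frob Y ^+ 2)%:C by rewrite -{2}hY frob_sqr.
have eW : \tr (W *m W) = (frob W ^+ 2)%:C by rewrite -{2}hW frob_sqr.
have quad a : 0 <= a ^+ 2 * frob Y ^+ 2 - 2 * a * x + frob W ^+ 2.
  have e : \tr ((a%:C *: Y - W) *m adj (a%:C *: Y - W)) =
      (a ^+ 2 * frob Y ^+ 2 - 2 * a * x + frob W ^+ 2)%:C.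
    rewrite adjD adjN adjZ_real hY hW mulmxBl !mulmxBr -!scalemxAl -!scalemxAr.
    rewrite !linearB !linearZ /= (mxtrace_mulC W Y) (herm_mxtrace_mul_real hY hW) eY eW.
    by rewrite rmorphD rmorphB !rmorphM rmorph_nat /= -/x -![_ *: _]/(_ * _); ring.
  by rewrite -ler0c -e -frob_sqr ler0c sqr_ge0.
have := quad_ge0_discr (sqr_ge0 (frob Y)) quad.
rewrite -exprMn -ler_sqrt ?sqr_ge0 // !sqrtr_sqr [X in _ <= X]ger0_norm //.
by rewrite mulr_ge0 ?sqrtr_ge0.
Qed.

(** * Pauli correlation operators *)

Implicit Types (a b : 'rV[R]_3) (u v V : 'I_3 -> 'rV[R]_3) (k l : 'I_3).

Lemma ord3_cases (P : 'I_3 -> Prop) : P 0 -> P 1 -> P 2%:R -> forall k, P k.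
Proof.
move=> P0 P1 P2 [[|[|[|//]]] lt_k3].
- by rewrite (_ : Ordinal lt_k3 = 0) //; apply: val_inj.
- by rewrite (_ : Ordinal lt_k3 = 1) //; apply: val_inj.
- by rewrite (_ : Ordinal lt_k3 = 2%:R) //; apply: val_inj.
Qed.

Lemma sum_ord2 (V : nmodType) (F : 'I_2 -> V) : \sum_i F i = F 0 + F 1.
Proof. by rewrite !big_ord_recl big_ord0 addr0; congr (F _ + F _); exact: val_inj. Qed.

Lemma sum_ord3 (V : nmodType) (F : 'I_3 -> V) : \sum_i F i = F 0 + F 1 + F 2%:R.
Proof.
by rewrite !big_ord_recl big_ord0 addr0 addrA; congr (F _ + F _ + F _); exact: val_inj.
Qed.

Lemma mxtrace2 (A : 'M[C]_2) : \tr A = A 0 0 + A 1 1.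
Proof. by rewrite /mxtrace sum_ord2. Qed.

Lemma mulmx2E (A B : 'M[C]_2) i j : (A *m B) i j = A i 0 * B 0 j + A i 1 * B 1 j.
Proof. by rewrite mxE sum_ord2. Qed.

Lemma mxtrace_pauli k : \tr (pauli R k) = 0.
Proof. by elim/ord3_cases: k; rewrite mxtrace2 !mxE /= ?addrN ?addr0. Qed.

Lemma adj_pauli k : adj (pauli R k) = pauli R k.
Proof.
elim/ord3_cases: k; apply/matrixP => i j; rewrite !mxE;
  case: i => [[|[|//]] ?]; case: j => [[|[|//]] ?] /=.
all: by apply/eqP; rewrite eq_complex /= ?oppr0 ?opprK ?eqxx.
Qed.

Lemma mxtrace_pauli_mul k l : \tr (pauli R k *m pauli R l) = if k == l then 2 else 0.
Proof.
elim/ord3_cases: k; elim/ord3_cases: l; rewrite mxtrace2 !mulmx2E !mxE /=.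
all: by apply/eqP; rewrite eq_complex /=; apply/andP; split; apply/eqP; ring.
Qed.

Lemma pdot_entry a i j : pdot a i j = \sum_k (a 0 k)%:C * pauli R k i j.
Proof. by rewrite /pdot summxE; apply: eq_bigr => k _; rewrite mxE. Qed.

Lemma mxtrace_pdot a : \tr (pdot a) = 0.
Proof. by rewrite /pdot mxtrace_sum big1 // => k _; rewrite mxtraceZ mxtrace_pauli mulr0. Qed.

Lemma adj_pdot a : adj (pdot a) = pdot a.
Proof. by rewrite /pdot adj_sum; apply: eq_bigr => k _; rewrite adjZ_real adj_pauli. Qed.

Lemma mxtrace_pdot_mul a b : \tr (pdot a *m pdot b) = 2 * (rdot a b)%:C.
Proof.
rewrite /pdot /rdot mulmx_suml mxtrace_sum.
under eq_bigr => k _ do rewrite mulmx_sumr mxtrace_sum.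
under eq_bigr => k _ do under eq_bigr => m _ do
  rewrite -scalemxAl -scalemxAr !mxtraceZ mxtrace_pauli_mul.
by rewrite !sum_ord3 /= !rmorphD !rmorphM /=; ring.
Qed.

Definition corr_op (u v : 'I_3 -> 'rV[R]_3) : 'M[C]_(2 * 2) :=
  \sum_i pdot (u i) *t pdot (v i).

Lemma mxtrace_mul_corr_op (M : 'M[C]_(2 * 2)) u v :
  \sum_i \tr (M *m (pdot (u i) *t pdot (v i))) = \tr (M *m corr_op u v).
Proof. by rewrite /corr_op mulmx_sumr mxtrace_sum. Qed.

Lemma adj_corr_op u v : adj (corr_op u v) = corr_op u v.
Proof. by rewrite /corr_op adj_sum; apply: eq_bigr => i _; rewrite adj_tens !adj_pdot. Qed.

Lemma mxtrace_corr_op u v : \tr (corr_op u v) = 0.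
Proof. by rewrite /corr_op mxtrace_sum big1 // => i _; rewrite mxtrace_tens mxtrace_pdot mul0r. Qed.

Lemma frob_corr_op u v : (forall i, unit_vec (u i)) -> orthonormal3 v ->
  frob (corr_op u v) = 2 * Num.sqrt 3.
Proof.
move=> u_unit v_orth; rewrite frobE adj_corr_op.
have -> : 2 * Num.sqrt 3 = Num.sqrt (12 : R).
  by rewrite -[12 : R]/((2 ^ 2 * 3)%N%:R) natrM natrX sqrtrM ?sqr_ge0 // sqrtr_sqr ger0_norm.
congr Num.sqrt.
rewrite /corr_op mulmx_suml mxtrace_sum.
under eq_bigr => i _ do rewrite mulmx_sumr mxtrace_sum.
under eq_bigr => i _ do under eq_bigr => j _ do
  rewrite tensmx_mul mxtrace_tens !mxtrace_pdot_mul v_orth.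
rewrite (eq_bigr (fun _ => 4)) ?sum_ord3; first by rewrite /=; lra.
move=> i _; rewrite (bigD1 i) //= eqxx (u_unit i) big1 ?addr0.
  by rewrite !mulr1 -natrM.
by move=> j /negbTE; rewrite eq_sym => ->; rewrite !mulr0.
Qed.

(** * States of purity at most 1/2 *)

Lemma purity_frob n (s : 'M[C]_n) : (0 < n)%N -> adj s = s -> \tr s = 1 ->
  purity s = (frob (s - (n%:R^-1)%:C%:M) ^+ 2 + n%:R^-1)%:C.
Proof.
move=> n_gt0 hs htr; set q : R := n%:R^-1.
have qn : q *+ n = 1 by rewrite -mulr_natr mulVf // pnatr_eq0 -lt0n.
rewrite rmorphD /= frob_sqr adjD adjN adj_scalar_real hs mulmxBl !mulmxBr.
rewrite mul_mx_scalar !mul_scalar_mx !linearB !linearZ /= mxtrace_scalar htr.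
by rewrite -rmorphMn qn /purity -![_ *: _]/(_ * _); ring.
Qed.

Lemma purity_le_half_frob (s : 'M[C]_(2 * 2)) : density s ->
  (purity s <= (2^-1)%:C) = (frob (s - ((4 : R)^-1)%:C%:M) <= 2^-1).
Proof.
case=> hs _ htr; rewrite (@purity_frob 4 s) // lecR.
have f_ge0 : 0 <= frob (s - ((4 : R)^-1)%:C%:M) by exact: sqrtr_ge0.
by apply/idP/idP => h; nra.
Qed.

Lemma frob_le_AUS3 (s : 'M[C]_(2 * 2)) :
  density s -> frob (s - ((4 : R)^-1)%:C%:M) <= 2^-1 -> AUS3 s.
Proof.
move=> ds hX; split=> // U u v hU u_unit v_orth.
have [hs _ _] := ds; set X := s - _ in hX *.
have eS : U *m s *m adj U = U *m X *m adj U + ((4 : R)^-1)%:C%:M.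
  by rewrite /X mulmxBr mulmxBl mul_mx_scalar -scalemxAl hU scalemx1 subrK.
have hY : adj (U *m X *m adj U) = U *m X *m adj U.
  by rewrite !adjM adjK /X adjD adjN adj_scalar_real hs mulmxA.
rewrite mxtrace_mul_corr_op eS mulmxDl mxtraceD mul_scalar_mx mxtraceZ mxtrace_corr_op.
have := herm_mxtrace_mul_le hY (adj_corr_op u v).
rewrite mulr0 addr0 herm_mxtrace_mul_real ?adj_corr_op // normc_real -rmorphM !lecR.
have s3_gt0 : 0 < Num.sqrt (3 : R) by rewrite sqrtr_gt0.
rewrite frob_unitary_conj // frob_corr_op // ler_pdivrMl // mulr1; nra.
Qed.

(** * Bell-diagonal correlation operators *)

Lemma orthonormal3_cols V : orthonormal3 V ->
  forall k l, \sum_j V j 0 k * V j 0 l = (k == l)%:R.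
Proof.
move=> V_orth k l; pose M : 'M[R]_3 := \matrix_(j, k) V j 0 k.
have MMT : M *m M^T = 1%:M.
  by apply/matrixP => i j; rewrite !mxE -V_orth /rdot; apply: eq_bigr => m _; rewrite !mxE.
have := congr1 (fun A : 'M[R]_3 => A k l) (mulmx1C MMT).
by rewrite /= !mxE => <-; apply: eq_bigr => j _; rewrite !mxE.
Qed.

Lemma corr_op_diag (c : 'I_3 -> R) V : orthonormal3 V ->
  corr_op (fun j => \row_k (c k * V j 0 k)) V = \sum_k (c k)%:C *: (pauli R k *t pauli R k).
Proof.
move=> V_orth; apply/matrixP => x y.
case: (mxtens_indexP x) => i1 i2; case: (mxtens_indexP y) => j1 j2.
rewrite /corr_op !summxE.
under eq_bigr => j _ do rewrite tensmxE !pdot_entry mulr_suml.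
under [RHS]eq_bigr => k _ do rewrite mxE tensmxE.
rewrite exchange_big /=; apply: eq_bigr => k _.
under eq_bigr => j _ do rewrite mulr_sumr.
have split_coef l : \sum_j ((\row_k (c k * V j 0 k)) 0 k)%:C * pauli R k i1 j1
                      * ((V j 0 l)%:C * pauli R l i2 j2)
    = (c k)%:C * pauli R k i1 j1 * pauli R l i2 j2 * (k == l)%:R%:C.
  rewrite -(orthonormal3_cols V_orth) rmorph_sum mulr_sumr.
  by apply: eq_bigr => j _; rewrite !mxE !rmorphM; ring.
rewrite exchange_big /= (bigD1 k) //= split_coef eqxx mulr1 mulrA big1 ?addr0 //.
by move=> l /negbTE l_neq_k; rewrite split_coef eq_sym l_neq_k mulr0.
Qed.

(* The columns of [bell_mx] are [sqrt 2] times the Bell states Phi+, Phi-, Psi+, Psi-. *)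
Definition bell_mx : 'M[R]_(2 * 2) := \matrix_(x, k)
  match nat_of_ord x, nat_of_ord k with
  | 0, 0 | 3, 0 | 0, 1 | 1, 2 | 2, 2 | 1, 3 => 1
  | 3, 1 | 2, 3 => -1
  | _, _ => 0
  end.

Definition pauli_corr_real (c0 c1 c2 : R) : 'M[R]_(2 * 2) := \matrix_(x, y)
  match nat_of_ord x, nat_of_ord y with
  | 0, 0 | 3, 3 => c2
  | 1, 1 | 2, 2 => - c2
  | 0, 3 | 3, 0 => c0 - c1
  | 1, 2 | 2, 1 => c0 + c1
  | _, _ => 0
  end.

Lemma pauli_corr_realE (c : 'I_3 -> R) :
  \sum_k (c k)%:C *: (pauli R k *t pauli R k) =
  map_mx realC (pauli_corr_real (c 0) (c 1) (c 2%:R)).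
Proof.
apply/matrixP => x y.
case: (mxtens_indexP x) => i1 i2; case: (mxtens_indexP y) => j1 j2.
rewrite summxE sum_ord3 !mxE !mxtens_indexK.
case: i1 => [[|[|//]] ?]; case: i2 => [[|[|//]] ?];
case: j1 => [[|[|//]] ?]; case: j2 => [[|[|//]] ?] => /=.
all: by apply/eqP; rewrite eq_complex /=; apply/andP; split; apply/eqP; ring.
Qed.

Lemma bell_mx_orth : bell_mx *m bell_mx^T = 2%:M.
Proof.
apply/matrixP => x z; rewrite !mxE !big_ord_recl big_ord0 /=.
by case: x => [[|[|[|[|//]]]] ?]; case: z => [[|[|[|[|//]]]] ?]; rewrite !mxE /=; lra.
Qed.

(* Eigenvalues of [c0 s1 (x) s1 + c1 s2 (x) s2 + c2 s3 (x) s3] on the columns of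
   [bell_mx]. *)
Definition bell_eig (c0 c1 c2 : R) (k : nat) : R :=
  match k with
  | 0 => c0 - c1 + c2 | 1 => - c0 + c1 + c2 | 2 => c0 + c1 - c2
  | _ => - c0 - c1 - c2
  end.

Lemma bell_mx_diag c0 c1 c2 (k : 'I_(2 * 2)) :
  (bell_mx^T *m pauli_corr_real c0 c1 c2 *m bell_mx) k k = 2 * bell_eig c0 c1 c2 k.
Proof.
rewrite mxE !big_ord_recl big_ord0 /= !mxE !big_ord_recl !big_ord0 /=.
by case: k => [[|[|[|[|//]]]] ?]; rewrite !mxE /=; lra.
Qed.

Lemma sqrt_half_mul2 : Num.sqrt (2 : R)^-1 * Num.sqrt 2^-1 * 2 = 1.
Proof. by rewrite -expr2 sqr_sqrtr ?invr_ge0 // mulVf // pnatr_eq0. Qed.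

Definition bell_basis : 'M[C]_(2 * 2) := (Num.sqrt (2 : R)^-1)%:C *: map_mx realC bell_mx.

Lemma unitary_bell_basis : unitary bell_basis.
Proof.
rewrite /unitary /bell_basis adjZ_real adj_map_real -scalemxAl -scalemxAr -map_mxM.
rewrite bell_mx_orth scalerA; apply/matrixP => i j; rewrite !mxE.
by case: eqP => _; rewrite ?mulr0n ?mulr1n ?rmorph0 ?mulr0 // -!rmorphM sqrt_half_mul2.
Qed.

Lemma mxtrace_bell_basis (d : 'rV[R]_(2 * 2)) c0 c1 c2 :
  \tr (bell_basis *m diag_mx (map_mx realC d) *m adj bell_basis
        *m map_mx realC (pauli_corr_real c0 c1 c2)) =
  (\sum_k d 0 k * bell_eig c0 c1 c2 k)%:C.
Proof.
set h := Num.sqrt (2 : R)^-1; set W := pauli_corr_real c0 c1 c2.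
have eM : adj bell_basis *m (map_mx realC W *m bell_basis) =
    (h * h)%:C *: map_mx realC (bell_mx^T *m W *m bell_mx).
  rewrite /bell_basis adjZ_real adj_map_real -scalemxAr -scalemxAr -scalemxAl scalerA.
  by rewrite rmorphM !map_mxM mulmxA.
rewrite -!mulmxA mxtrace_mulC -!mulmxA mul_diag_mx eM /mxtrace rmorph_sum.
apply: eq_bigr => k _; rewrite 4!mxE bell_mx_diag -!rmorphM /=; congr _%:C.
by rewrite [h * h * _]mulrA sqrt_half_mul2 mul1r.
Qed.

(** * Choice of the witness *)

Lemma bell_eig_onto (l0 l1 l2 l3 : R) : l0 + l1 + l2 + l3 = 0 ->
  exists c0 c1 c2 : R,
    [/\ [/\ bell_eig c0 c1 c2 0 = l0, bell_eig c0 c1 c2 1 = l1,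
            bell_eig c0 c1 c2 2 = l2 & bell_eig c0 c1 c2 3 = l3]
      & 4 * (c0 ^+ 2 + c1 ^+ 2 + c2 ^+ 2) = l0 ^+ 2 + l1 ^+ 2 + l2 ^+ 2 + l3 ^+ 2].
Proof.
move=> l_sum.
exists ((l0 - l1 + l2 - l3) / 4), ((- l0 + l1 + l2 - l3) / 4), ((l0 + l1 - l2 - l3) / 4).
rewrite /bell_eig /=; split; first by split; lra.
have -> : l3 = - l0 - l1 - l2 by lra.
by field.
Qed.

Lemma exists_bell_eig (d0 d1 d2 d3 : R) : d0 + d1 + d2 + d3 = 1 ->
  2^-1 < d0 ^+ 2 + d1 ^+ 2 + d2 ^+ 2 + d3 ^+ 2 ->
  exists c0 c1 c2 : R, c0 ^+ 2 + c1 ^+ 2 + c2 ^+ 2 = 3 /\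
    Num.sqrt 3 < d0 * bell_eig c0 c1 c2 0 + d1 * bell_eig c0 c1 c2 1
                 + d2 * bell_eig c0 c1 c2 2 + d3 * bell_eig c0 c1 c2 3.
Proof.
move=> d_sum d_sqr.
pose S := (d0 - 4^-1) ^+ 2 + (d1 - 4^-1) ^+ 2 + (d2 - 4^-1) ^+ 2 + (d3 - 4^-1) ^+ 2.
pose r := Num.sqrt S.
have r2 : r ^+ 2 = S by rewrite sqr_sqrtr // !addr_ge0 ?sqr_ge0.
have r_gt : 2^-1 < r.
  have r_ge0 : 0 <= r by exact: sqrtr_ge0.
  have : 4^-1 < r ^+ 2.
    by rewrite r2 /S (_ : d3 = 1 - d0 - d1 - d2); [nra | lra].
  nra.
have s3_gt0 : 0 < Num.sqrt (3 : R) by rewrite sqrtr_gt0.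
pose t := 2 * Num.sqrt 3 / r.
have tr_eq : t * r = 2 * Num.sqrt 3 by rewrite /t mulfVK //; apply/eqP; lra.
have l_sum : t * (d0 - 4^-1) + t * (d1 - 4^-1) + t * (d2 - 4^-1) + t * (d3 - 4^-1) = 0.
  by rewrite -!mulrDr (_ : _ + _ = 0) ?mulr0 //; lra.
have [c0 [c1 [c2 [[e0 e1 e2 e3] c_sqr]]]] := bell_eig_onto l_sum.
exists c0, c1, c2; rewrite e0 e1 e2 e3; split.
  have : 4 * (c0 ^+ 2 + c1 ^+ 2 + c2 ^+ 2) = (t * r) ^+ 2 by rewrite c_sqr !exprMn r2 /S; ring.
  by rewrite tr_eq exprMn sqr_sqrtr //; lra.
have -> : d0 * (t * (d0 - 4^-1)) + d1 * (t * (d1 - 4^-1)) + d2 * (t * (d2 - 4^-1))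
    + d3 * (t * (d3 - 4^-1)) = t * r * r.
  by rewrite -mulrA -expr2 r2 /S (_ : d3 = 1 - d0 - d1 - d2); [field | lra].
rewrite tr_eq; nra.
Qed.

Lemma unit_isotropic2 (x y : R) : 0 <= x -> y <= 0 ->
  exists a b : R, a ^+ 2 + b ^+ 2 = 1 /\ x * a ^+ 2 + y * b ^+ 2 = 0.
Proof.
move=> x_ge0 y_le0; have [xy0|xy_neq0] := eqVneq (x - y) 0.
  by exists 1, 0; rewrite expr1n expr0n addr0 mulr0 addr0 mulr1; split=> //; lra.
have xy_gt0 : 0 < x - y by rewrite lt_def xy_neq0 /=; lra.
exists (Num.sqrt (- y / (x - y))), (Num.sqrt (x / (x - y))).
by rewrite !sqr_sqrtr ?divr_ge0 ?oppr_ge0 //; [split; field; lra | lra | lra].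
Qed.

Lemma sum_ord3_perm (F : 'I_3 -> R) (p q r : 'I_3) : p != q -> q != r -> p != r ->
  \sum_k F k = F p + F q + F r.
Proof.
rewrite sum_ord3.
by elim/ord3_cases: p; elim/ord3_cases: q; elim/ord3_cases: r => //= _ _ _; lra.
Qed.

Definition vec3 (p q : 'I_3) (x y z : R) : 'rV[R]_3 :=
  \row_k (if k == p then x else if k == q then y else z).

Section Vec3.
Variables (p q r : 'I_3).
Hypotheses (pq : p != q) (qr : q != r) (pr : p != r).

Lemma vec3E x y z :
  [/\ vec3 p q x y z 0 p = x, vec3 p q x y z 0 q = y & vec3 p q x y z 0 r = z].
Proof.
by rewrite !mxE eqxx eq_sym (negbTE pq) eqxx eq_sym (negbTE pr) eq_sym (negbTE qr).
Qed.

Lemma rdot_vec3 x y z x' y' z' :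
  rdot (vec3 p q x y z) (vec3 p q x' y' z') = x * x' + y * y' + z * z'.
Proof.
rewrite /rdot (sum_ord3_perm _ pq qr pr).
by have [-> -> ->] := vec3E x y z; have [-> -> ->] := vec3E x' y' z'.
Qed.

Lemma diag_form_vec3 (e : 'I_3 -> R) x y z :
  \sum_k e k * vec3 p q x y z 0 k ^+ 2 = e p * x ^+ 2 + e q * y ^+ 2 + e r * z ^+ 2.
Proof. by rewrite (sum_ord3_perm _ pq qr pr); have [-> -> ->] := vec3E x y z. Qed.

(* In the coordinates [(p, q, r)], [(a, b, 0)] is isotropic by the choice of [a, b], and so
   are [(-b, a, 1)/sqrt 2] and [(b, -a, 1)/sqrt 2] because [e p b^2 + e q a^2 = - e r]. *)
Lemma isotropic_orthonormal3_at (e : 'I_3 -> R) :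
  0 <= e p -> e q <= 0 -> e p + e q + e r = 0 ->
  exists V : 'I_3 -> 'rV[R]_3, orthonormal3 V /\ forall j, \sum_k e k * V j 0 k ^+ 2 = 0.
Proof.
move=> ep_ge0 eq_le0 e_sum.
have [a [b [ab_unit ab_iso]]] := unit_isotropic2 ep_ge0 eq_le0.
pose h := Num.sqrt (2 : R)^-1.
have h2 : h ^+ 2 = 2^-1 by rewrite sqr_sqrtr // invr_ge0.
pose V (j : 'I_3) := if j == 0 then vec3 p q a b 0
  else if j == 1 then vec3 p q (- b * h) (a * h) h else vec3 p q (b * h) (- a * h) h.
exists V; split.
  move=> i j; rewrite /V.
  by elim/ord3_cases: i; elim/ord3_cases: j => /=; rewrite rdot_vec3; nra.
have ba_iso : e p * b ^+ 2 + e q * a ^+ 2 + e r = 0.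
  by have := congr1 (fun t => (e p + e q) * t) ab_unit; rewrite /=; nra.
move=> j; rewrite /V; elim/ord3_cases: j => /=; rewrite diag_form_vec3.
all: by rewrite ?exprMn ?h2 ?sqrrN ?expr0n /=; nra.
Qed.

End Vec3.

Lemma exists_isotropic_orthonormal3 (e : 'I_3 -> R) : e 0 + e 1 + e 2%:R = 0 ->
  exists V : 'I_3 -> 'rV[R]_3, orthonormal3 V /\ forall j, \sum_k e k * V j 0 k ^+ 2 = 0.
Proof.
move=> e_sum; have [e0_ge0|e0_lt0] := lerP 0 (e 0).
  have [e2_le0|e2_gt0] := lerP (e 2%:R) 0.
    by apply: (@isotropic_orthonormal3_at 0 2%:R 1) => //; lra.
  by apply: (@isotropic_orthonormal3_at 0 1 2%:R) => //; lra.
have [e1_ge0|e1_lt0] := lerP 0 (e 1).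
  by apply: (@isotropic_orthonormal3_at 1 0 2%:R) => //; lra.
by apply: (@isotropic_orthonormal3_at 2%:R 0 1) => //; lra.
Qed.

Lemma unit_vec_diag_scale (c : 'I_3 -> R) V : orthonormal3 V ->
  (forall j, \sum_k (c k ^+ 2 - 1) * V j 0 k ^+ 2 = 0) ->
  forall j, unit_vec (\row_k (c k * V j 0 k)).
Proof.
move=> V_orth V_iso j; have Vj_unit : rdot (V j) (V j) = 1 by rewrite V_orth eqxx.
rewrite /unit_vec -Vj_unit; apply/eqP; rewrite -subr_eq0 /rdot -sumrB.
by apply/eqP; rewrite -[RHS](V_iso j); apply: eq_bigr => k _; rewrite !mxE; ring.
Qed.

(** * States of purity above 1/2 *)

Lemma herm_spectral n (s : 'M[C]_n) : adj s = s ->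
  exists (P : 'M[C]_n) (d : 'rV[R]_n),
    unitary P /\ s = adj P *m diag_mx (map_mx realC d) *m P.
Proof.
move=> hs; have adjE m p (M : 'M[C]_(m, p)) : map_mx Num.conj M^T = adj M.
  by apply/matrixP => i j; rewrite !mxE.
set P := spectralmx s; set d := spectral_diag s.
have hP : unitary P by move/unitarymxP: (spectral_unitarymx s); rewrite adjE.
have s_normal : s \is normalmx by apply/normalmxP; rewrite adjE hs.
have es : s = adj P *m diag_mx d *m P.
  by rewrite -adjE -invmx_unitary ?spectral_unitarymx //; apply/orthomx_spectralP.
have eD : P *m s *m adj P = diag_mx d.
  by rewrite es !mulmxA hP mul1mx -mulmxA hP mulmx1.
have d_herm : adj (diag_mx d) = diag_mx d by rewrite -eD !adjM adjK hs mulmxA.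
exists P, (\row_k complex.Re (d 0 k)); split=> //.
rewrite [LHS]es; congr (_ *m diag_mx _ *m _); apply/matrixP => i k.
rewrite (ord1 i) !mxE; apply: conjc_fixed_real.
by move/matrixP/(_ k k): d_herm; rewrite !mxE eqxx !mulr1n.
Qed.

Lemma mxtrace_diag_conj n (P : 'M[C]_n) (d : 'rV[R]_n) : unitary P ->
  \tr (adj P *m diag_mx (map_mx realC d) *m P) = (\sum_k d 0 k)%:C.
Proof.
move=> hP; rewrite (mxtrace_conj _ hP) mxtrace_diag rmorph_sum.
by apply: eq_bigr => k _; rewrite mxE.
Qed.

Lemma purity_diag_conj n (P : 'M[C]_n) (d : 'rV[R]_n) : unitary P ->
  purity (adj P *m diag_mx (map_mx realC d) *m P) = (\sum_k d 0 k ^+ 2)%:C.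
Proof.
move=> hP; rewrite /purity !mulmxA -(mulmxA _ P) hP mulmx1 -(mulmxA (adj P)).
rewrite (mxtrace_conj _ hP) mul_diag_mx /mxtrace rmorph_sum.
by apply: eq_bigr => k _; rewrite !mxE eqxx mulr1n rmorphXn.
Qed.

Lemma AUS3_purity_le (s : 'M[C]_(2 * 2)) : AUS3 s -> purity s <= (2^-1)%:C.
Proof.
case=> -[hs _ htr] hAUS; have [P [d [hP es]]] := herm_spectral hs.
have d_sum : \sum_k d 0 k = 1.
  by move: htr; rewrite es mxtrace_diag_conj // => /(congr1 (@complex.Re R)).
rewrite es purity_diag_conj // lecR leNgt; apply/negP => d_sqr.
move: d_sum d_sqr; rewrite !big_ord_recl !big_ord0 !addr0 !addrA => d_sum d_sqr.
have [c0 [c1 [c2 [c_sqr c_eig]]]] := exists_bell_eig d_sum d_sqr.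
pose c k := if k == 0 then c0 else if k == 1 then c1 else c2.
have c_trace : (c 0 ^+ 2 - 1) + (c 1 ^+ 2 - 1) + (c 2%:R ^+ 2 - 1) = 0.
  by rewrite /c /=; lra.
have [V [V_orth V_iso]] := @exists_isotropic_orthonormal3 (fun k => c k ^+ 2 - 1) c_trace.
have eS : bell_basis *m P *m s *m adj (bell_basis *m P) =
    bell_basis *m diag_mx (map_mx realC d) *m adj bell_basis.
  rewrite adjM es !mulmxA -(mulmxA bell_basis P) hP mulmx1.
  by rewrite -(mulmxA _ P) hP mulmx1.
have := hAUS _ _ V (unitaryM unitary_bell_basis hP)
  (unit_vec_diag_scale V_orth V_iso) V_orth.
rewrite mxtrace_mul_corr_op corr_op_diag // pauli_corr_realE eS mxtrace_bell_basis.
rewrite normc_real -rmorphM lecR ler_pdivrMl ?sqrtr_gt0 // mulr1.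
rewrite !big_ord_recl big_ord0 addr0 /= !addrA => /(le_trans (ler_norm _)).
by move: c_eig; rewrite /c /bell_eig /=; lra.
Qed.

End TwoQubitCorrelations.

Theorem corollary1 (R : rcfType) (s : 'M[R[i]]_(2 * 2)) :
  density s ->
  (AUS3 s <-> purity s <= (2 : R)^-1%:C) /\
  (AUS3 s <-> frob (s - (4 : R)^-1%:C%:M) <= (2 : R)^-1).
Proof.
move=> ds; have AUS3_purity : AUS3 s <-> purity s <= (2 : R)^-1%:C.
  split; first exact: AUS3_purity_le.
  by rewrite purity_le_half_frob // => /(frob_le_AUS3 ds).
by split=> //; rewrite -purity_le_half_frob.
Qed.
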